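(* Let $A$ be a JBW algebra, let $C$ be a maximal element of $ASU(A)$, and let $p\in C$ be a projection. Then $\dim U_p(C)=1$ if and only if $\dim U_p(A)=1$.
   Context: A JB algebra is a real Banach algebra $(A,\circ)$ with a commutative product satisfying $a\circ(b\circ a^2)=(a\circ b)\circ a^2$, $\|a^2\|\le\|a^2+b^2\|$, $\|a\|^2=\|a^2\|$; a JBW algebra is a JB algebra that is a dual Banach space (it has a unit $\mathbf{1}$). A projection is an element $p$ with $p\circ p=p$. For $a\in A$, $U_a:A\to A$ is $U_a(b)=2a\circ(a\circ b)-a^2\circ b$. $ASU(A)$ is the set of all norm-closed associative subalgebras of $A$ containing $\mathbf{1}$, ordered by inclusion; a maximal element is one not properly contained in another element of $ASU(A)$. *)

From HB Require Import structures.
From mathcomp Require Import all_boot all_order all_algebra.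
From mathcomp Require Import all_classical all_reals all_analysis.
Set Implicit Arguments. Unset Strict Implicit. Unset Printing Implicit Defensive.
Import Order.TTheory GRing.Theory Num.Theory.
Import numFieldNormedType.Exports.
Local Open Scope classical_set_scope.
Local Open Scope ring_scope.

Section JB.
Variables (R : realType) (A : completeNormedModType R).
Variables (mul : A -> A -> A) (one : A).

Definition sq (a : A) := mul a a.

Definition is_JB_algebra : Prop :=
  (forall a b c, mul (a + b) c = mul a c + mul b c) /\
  (forall (k : R) a b, mul (k *: a) b = k *: mul a b) /\
  (forall a b, mul a b = mul b a) /\
  (forall a b, `|mul a b| <= `|a| * `|b|) /\
  (forall a b, mul a (mul b (sq a)) = mul (mul a b) (sq a)) /\
  (forall a b, `|sq a| <= `|sq a + sq b|) /\
  (forall a, `|a| ^+ 2 = `|sq a|).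

Definition is_opnorm (X : normedModType R) (f : X -> R) (r : R) : Prop :=
  (forall x : X, `|x| <= 1 -> `|f x| <= r) /\
  (forall e : R, 0 < e -> exists x : X, `|x| <= 1 /\ r - e < `|f x|).

(* A is a dual Banach space: A is isometrically linearly isomorphic to the
   Banach dual X* (bounded linear functionals, operator norm) of some real
   normed space X. *)
Definition is_dual_Banach_space : Prop :=
  exists (X : normedModType R) (T : A -> X -> R),
    [/\ (forall a, (forall x y, T a (x + y) = T a x + T a y) /\
                   (forall (k : R) x, T a (k *: x) = k * T a x) /\
                   continuous (T a)),
        (forall a b x, T (a + b) x = T a x + T b x),
        (forall (k : R) a x, T (k *: a) x = k * T a x),
        (forall f : X -> R, (forall x y, f (x + y) = f x + f y) ->
                   (forall (k : R) x, f (k *: x) = k * f x) ->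
                   continuous f -> exists a, T a = f) &
        (forall a, is_opnorm (T a) `|a|)].

Definition is_JBW_algebra : Prop :=
  [/\ is_JB_algebra, is_dual_Banach_space & (forall a, mul one a = a)].

Definition Uop (a b : A) : A := 2%:R *: mul a (mul a b) - mul (sq a) b.

Definition in_ASU (C : set A) : Prop :=
  closed C /\ C one /\ C 0 /\
  (forall a b, C a -> C b -> C (a + b)) /\
  (forall (k : R) a, C a -> C (k *: a)) /\
  (forall a b, C a -> C b -> C (mul a b)) /\
  (forall a b c, C a -> C b -> C c -> mul (mul a b) c = mul a (mul b c)).

Definition maximal_ASU (C : set A) : Prop :=
  in_ASU C /\ (forall D : set A, in_ASU D -> C `<=` D -> D = C).

Definition dim1 (S : set A) : Prop :=
  exists v, [/\ S v, v != 0 & forall w, S w -> exists k : R, w = k *: v].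

End JB.

From mathcomp Require Import all_boot all_order all_algebra.
From mathcomp Require Import all_classical all_reals all_analysis.
From mathcomp Require Import ring lra.
Set Implicit Arguments. Unset Strict Implicit. Unset Printing Implicit Defensive.
Import Order.TTheory GRing.Theory Num.Theory.
Import numFieldNormedType.Exports.
Local Open Scope classical_set_scope.
Local Open Scope ring_scope.

(* Both [U_p(C) <= U_p(A)] contain [p], which gives one direction.  For the
   other, associativity gives [U_p c = p o c] on [C], so [dim U_p(C) = 1] means
   [p o C = R p], i.e. [C = C_0 + R p] with [C_0] the Peirce 0-space of [p] in
   [C].  Let [b = U_p a], an element of the Peirce 1-space of [p].  The Peirce
   rules [A_1 o A_0 = 0], [A_i o A_i <= A_i] (from the linearized Jordan
   identity) and the power associativity of [b] make the closed span of [C_0],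
   [p] and the powers of [b] an associative subalgebra containing [C].  By
   maximality it is [C], so [b = U_p b] lies in [U_p(C) = R p]. *)

(** * Linear combinations in a module *)

Section LinearCombination.
Variables (R : comNzRingType) (V : lmodType R).

Inductive lin_term := LinAtom of nat | LinZero | LinAdd of lin_term & lin_term
  | LinOpp of lin_term | LinScale of R & lin_term.

Fixpoint lin_eval (env : seq V) (t : lin_term) : V :=
  match t with
  | LinAtom j => env`_j
  | LinZero => 0
  | LinAdd t1 t2 => lin_eval env t1 + lin_eval env t2
  | LinOpp t1 => - lin_eval env t1
  | LinScale k t1 => k *: lin_eval env t1
  end.

Fixpoint lin_coef (t : lin_term) (i : nat) : R :=
  match t with
  | LinAtom j => (i == j)%:R
  | LinZero => 0
  | LinAdd t1 t2 => lin_coef t1 i + lin_coef t2 i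
  | LinOpp t1 => - lin_coef t1 i
  | LinScale k t1 => k * lin_coef t1 i
  end.

Lemma lin_evalE env t : lin_eval env t = \sum_(i < size env) lin_coef t i *: env`_i.
Proof.
elim: t => [j||t1 IH1 t2 IH2|t1 IH1|k t1 IH1] /=.
- have [jlt|jge] := ltnP j (size env); last first.
    rewrite nth_default // big1 // => i _.
    by rewrite ltn_eqF ?scale0r // (leq_trans (ltn_ord i) jge).
  rewrite (bigD1 (Ordinal jlt)) //= eqxx scale1r big1 ?addr0 // => i ne.
  by rewrite (negbTE (ne : val i != j)) scale0r.
- by rewrite big1 // => i _; rewrite scale0r.
- by rewrite IH1 IH2 -big_split; apply: eq_bigr => i _; rewrite scalerDl.
- by rewrite IH1 -sumrN; apply: eq_bigr => i _; rewrite scaleNr.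
- by rewrite IH1 scaler_sumr; apply: eq_bigr => i _; rewrite scalerA.
Qed.

Lemma lin_eval_eq env t1 t2 :
  (forall i, (i < size env)%N -> lin_coef t1 i = lin_coef t2 i) ->
  lin_eval env t1 = lin_eval env t2.
Proof. by move=> h; rewrite !lin_evalE; apply: eq_bigr => i _; rewrite h. Qed.

End LinearCombination.

Ltac lin_index env t :=
  match env with
  | ?u :: _ => let _ := constr:(ltac:(unify t u; exact tt) : unit) in constr:(O)
  | _ :: ?r => let n := lin_index r t in constr:(S n)
  end.

Ltac lin_atoms acc t :=
  lazymatch t with
  | 0 => acc
  | ?a + ?b => let acc := lin_atoms acc a in lin_atoms acc b
  | - ?a => lin_atoms acc a
  | _ *: ?a => lin_atoms acc a
  | _ => match constr:(tt) with
         | _ => let _ := lin_index acc t in acc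
         | _ => constr:(t :: acc)
         end
  end.

Ltac lin_reify R env t :=
  lazymatch t with
  | 0 => constr:(@LinZero R)
  | ?a + ?b =>
      let x := lin_reify R env a in let y := lin_reify R env b in constr:(LinAdd x y)
  | - ?a => let x := lin_reify R env a in constr:(LinOpp x)
  | ?k *: ?a => let x := lin_reify R env a in constr:(LinScale k x)
  | _ => let n := lin_index env t in constr:(@LinAtom R n)
  end.

Ltac lin_coefs i :=
  first [ by [] | case: i => [|i]; [ by move=> _ /=; ring | lin_coefs i ] ].

(* [lin_module R] proves an equation between R-linear combinations of arbitrary
   terms (atoms, compared up to conversion) by comparing the coefficient of
   each atom with [ring]. *)
Ltac lin_module R :=
  rewrite ?mulr2n;
  lazymatch goal with |- ?l = ?r =>
    let T := type of l in
    let env := lin_atoms (@nil T) l in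
    let env := lin_atoms env r in
    let el := lin_reify R env l in
    let er := lin_reify R env r in
    change (lin_eval env el = lin_eval env er); apply: lin_eval_eq;
    let i := fresh "i" in move=> i; lin_coefs i
  end.

(** * Jordan algebras *)

Definition jordan_product (R : numFieldType) (V : lmodType R) (mul : V -> V -> V) :=
  [/\ forall a b c, mul (a + b) c = mul a c + mul b c,
      forall (k : R) a b, mul (k *: a) b = k *: mul a b,
      forall a b, mul a b = mul b a &
      forall a b, mul a (mul b (mul a a)) = mul (mul a b) (mul a a)].

Section JordanAlgebra.
Variables (R : numFieldType) (V : lmodType R) (mul : V -> V -> V).
Hypothesis HJ : jordan_product mul.

Lemma jmulDl a b c : mul (a + b) c = mul a c + mul b c. Proof. by case: HJ. Qed.
Lemma jmulZl (k : R) a b : mul (k *: a) b = k *: mul a b. Proof. by case: HJ. Qed.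
Lemma jmulC a b : mul a b = mul b a. Proof. by case: HJ. Qed.
Lemma jordan_identity a b : mul a (mul b (mul a a)) = mul (mul a b) (mul a a).
Proof. by case: HJ. Qed.

Lemma jmulDr a b c : mul a (b + c) = mul a b + mul a c.
Proof. by rewrite !(jmulC a) jmulDl. Qed.
Lemma jmulZr (k : R) a b : mul a (k *: b) = k *: mul a b.
Proof. by rewrite !(jmulC a) jmulZl. Qed.
Lemma jmul0l a : mul 0 a = 0.
Proof. by rewrite -(scale0r 0) jmulZl !scale0r. Qed.
Lemma jmul0r a : mul a 0 = 0.
Proof. by rewrite jmulC jmul0l. Qed.
Lemma jmulNl a b : mul (- a) b = - mul a b.
Proof. by rewrite -scaleN1r jmulZl scaleN1r. Qed.
Lemma jmulNr a b : mul a (- b) = - mul a b.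
Proof. by rewrite !(jmulC a) jmulNl. Qed.
Lemma jmulBl a b c : mul (a - b) c = mul a c - mul b c.
Proof. by rewrite jmulDl jmulNl. Qed.
Lemma jmulBr a b c : mul a (b - c) = mul a b - mul a c.
Proof. by rewrite jmulDr jmulNr. Qed.

Definition jdefect b x y z := mul x (mul b (mul y z)) - mul (mul x b) (mul y z).

Lemma jdefectDl b x x' y z : jdefect b (x + x') y z = jdefect b x y z + jdefect b x' y z.
Proof. by rewrite /jdefect !jmulDl; lin_module R. Qed.
Lemma jdefectDm b x y y' z : jdefect b x (y + y') z = jdefect b x y z + jdefect b x y' z.
Proof. by rewrite /jdefect !(jmulDl, jmulDr); lin_module R. Qed.
Lemma jdefectNl b x y z : jdefect b (- x) y z = - jdefect b x y z.
Proof. by rewrite /jdefect !jmulNl; lin_module R. Qed.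
Lemma jdefectNm b x y z : jdefect b x (- y) z = - jdefect b x y z.
Proof. by rewrite /jdefect !(jmulNl, jmulNr); lin_module R. Qed.
Lemma jdefectC b x y z : jdefect b x y z = jdefect b x z y.
Proof. by rewrite /jdefect (jmulC y). Qed.
Lemma jdefectDr b x y z z' : jdefect b x y (z + z') = jdefect b x y z + jdefect b x y z'.
Proof. by rewrite jdefectC jdefectDm !(jdefectC _ _ y). Qed.
Lemma jdefectNr b x y z : jdefect b x y (- z) = - jdefect b x y z.
Proof. by rewrite jdefectC jdefectNm jdefectC. Qed.
Lemma jdefect_diag b a : jdefect b a a a = 0.
Proof. by rewrite /jdefect jordan_identity subrr. Qed.

(* The coefficient of [t] in the cubic [t |-> jdefect b (a+tc) (a+tc) (a+tc)]
   vanishes; it is read off from the values at [t = 1] and [t = -1]. *)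
Lemma jordan_identity_lin b a c : jdefect b c a a + jdefect b a a c *+ 2 = 0.
Proof.
have ep := jdefect_diag b (a + c); have em := jdefect_diag b (a - c).
rewrite !(jdefectDl, jdefectDm, jdefectDr) !jdefect_diag in ep.
rewrite !(jdefectDl, jdefectDm, jdefectDr, jdefectNl, jdefectNm, jdefectNr) in em.
rewrite !opprK !jdefect_diag in em.
rewrite !(jdefectC b a c a) !(jdefectC b c c a) in ep em.
have : (jdefect b c a a + jdefect b a a c *+ 2) *+ 2 = 0.
  by move: (congr2 (fun u v => u - v) ep em); rewrite subrr => <-; lin_module R.
by move/eqP; rewrite -scaler_nat scaler_eq0 pnatr_eq0 => /eqP.
Qed.

Section Peirce.
Variable p : V.
Hypothesis Hp : mul p p = p.

Lemma peirce_mul_U x :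
  mul p (2%:R *: mul p (mul p x) - mul p x) = 2%:R *: mul p (mul p x) - mul p x.
Proof.
have h := jordan_identity_lin p p x.
rewrite /jdefect !Hp (jmulC x p) (jmulC (mul p x) p) in h.
rewrite jmulBr jmulZr; apply: subr0_eq; rewrite -[RHS]h; lin_module R.
Qed.

Lemma peirce_mul10 x y : mul p x = x -> mul p y = 0 -> mul x y = 0.
Proof.
move=> px py.
have h1 := jordan_identity_lin x p y; have h2 := jordan_identity_lin y p x.
rewrite /jdefect !Hp py !jmul0r (jmulC x p) px ?jmul0l in h1.
rewrite /jdefect !Hp px (jmulC y p) py !jmul0r ?jmul0l in h2.
rewrite (jmulC (mul x y) p) (jmulC (mul y x) p) (jmulC y x) in h1 h2.
have pxy : mul p (mul x y) = 0 by rewrite -[RHS]h2; lin_module R.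
by rewrite -[RHS]h1 pxy; lin_module R.
Qed.

Lemma peirce_mul01 x y : mul p x = 0 -> mul p y = y -> mul x y = 0.
Proof. by move=> px py; rewrite jmulC; exact: peirce_mul10. Qed.

Lemma peirce_mul11 x z : mul p x = x -> mul p z = z -> mul p (mul x z) = mul x z.
Proof.
move=> px pz; have h := jordan_identity_lin x p z.
rewrite /jdefect !Hp pz (jmulC x p) px (jmulC z x) (jmulC (mul x z) p) in h.
by apply: subr0_eq; rewrite -[RHS]h; lin_module R.
Qed.

Lemma peirce_mul00 x z : mul p x = 0 -> mul p z = 0 -> mul p (mul x z) = 0.
Proof.
move=> px pz; have h := jordan_identity_lin x p z.
rewrite /jdefect !Hp pz (jmulC x p) px !jmul0r ?jmul0l (jmulC z x) (jmulC (mul x z) p) in h.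
by apply: oppr_inj; rewrite oppr0 -[RHS]h; lin_module R.
Qed.
End Peirce.

Definition operator_commute x y := forall c, mul x (mul y c) = mul y (mul x c).

Section Powers.
Variable a : V.

Fixpoint jpow n := if n is n'.+1 then mul a (jpow n') else a.

Lemma operator_commute_sq : operator_commute a (mul a a).
Proof. by move=> c; have := jordan_identity a c; rewrite !(jmulC c) (jmulC (mul a c)). Qed.

Lemma jmul_sq_pow n : mul (mul a a) (jpow n) = jpow n.+2.
Proof. by elim: n => [|n IH] /=; [rewrite jmulC | rewrite -operator_commute_sq IH]. Qed.

(* The linearized Jordan identity at [(a^n, a, c)] expresses the multiplication
   operator of [a^(n+2)] through those of [a], [a^2], [a^n] and [a^(n+1)]. *)
Lemma jmul_pow_rec n c : mul (jpow n.+2) c = mul (mul a a) (mul (jpow n) c)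
  + 2%:R *: mul (jpow n.+1) (mul a c) - 2%:R *: mul a (mul (jpow n) (mul a c)).
Proof.
have h := jordan_identity_lin (jpow n) a c.
rewrite /jdefect (jmulC (jpow n) (mul a a)) jmul_sq_pow (jmulC c (jpow n.+2)) in h.
rewrite (jmulC (mul c (jpow n))) (jmulC c (jpow n)) -/(jpow n.+1) in h.
by apply: subr0_eq; rewrite -[RHS]h; lin_module R.
Qed.

Lemma jpow_operator_commute n :
  operator_commute (jpow n) a /\ operator_commute (jpow n) (mul a a).
Proof.
pose P k := operator_commute (jpow k) a /\ operator_commute (jpow k) (mul a a).
suff : P n /\ P n.+1 by case.
elim: n => [|n [[IH1 IH2] [IH1' IH2']]].
  by split; split=> c //=; rewrite operator_commute_sq.
split=> //; split=> c.
- by rewrite !jmul_pow_rec !(jmulDr, jmulNr, jmulZr) !IH1 !IH1' -!operator_commute_sq.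
- by rewrite !jmul_pow_rec !(jmulDr, jmulNr, jmulZr) !operator_commute_sq !IH2 !IH2'
    !operator_commute_sq.
Qed.

Lemma jmul_pow i j : mul (jpow i) (jpow j) = jpow (i + j).+1.
Proof.
elim: j => [|j IH]; first by rewrite addn0 /= jmulC.
by rewrite /= (jpow_operator_commute i).1 IH addnS.
Qed.
End Powers.

Definition mul_closed (S : set V) := forall x y, S x -> S y -> S (mul x y).
Definition mul_assoc_on (S : set V) :=
  forall x y z, S x -> S y -> S z -> mul (mul x y) z = mul x (mul y z).

Inductive lspan (G : set V) : set V :=
| lspan_gen g : G g -> lspan G g
| lspan0 : lspan G 0
| lspanD x y : lspan G x -> lspan G y -> lspan G (x + y)
| lspanZ (k : R) x : lspan G x -> lspan G (k *: x).

Lemma lspan_mul_closed G :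
  (forall g h, G g -> G h -> lspan G (mul g h)) -> mul_closed (lspan G).
Proof.
move=> hG x y sx; elim: sx y => [g Gg||x1 x2 _ IH1 _ IH2|k x1 _ IH1] y sy.
- elim: sy => [h Gh||y1 y2 _ IH1 _ IH2|k y1 _ IH1].
  + exact: hG.
  + by rewrite jmul0r; exact: lspan0.
  + by rewrite jmulDr; exact: lspanD.
  + by rewrite jmulZr; exact: lspanZ.
- by rewrite jmul0l; exact: lspan0.
- by rewrite jmulDl; apply: lspanD; [exact: IH1 | exact: IH2].
- by rewrite jmulZl; apply: lspanZ; exact: IH1.
Qed.

Lemma lspan_mul_assoc G : mul_assoc_on G -> mul_assoc_on (lspan G).
Proof.
move=> hG.
have L1 x y z : G x -> G y -> lspan G z -> mul (mul x y) z = mul x (mul y z).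
  move=> Gx Gy; elim=> [g Gg||z1 z2 _ IH1 _ IH2|k z1 _ IH1].
  - exact: hG.
  - by rewrite !jmul0r.
  - by rewrite !jmulDr IH1 IH2.
  - by rewrite !jmulZr IH1.
have L2 x y z : G x -> lspan G y -> lspan G z -> mul (mul x y) z = mul x (mul y z).
  move=> Gx sy sz; elim: sy => [g Gg||y1 y2 _ IH1 _ IH2|k y1 _ IH1].
  - exact: L1.
  - by rewrite jmul0r !jmul0l jmul0r.
  - by rewrite jmulDr !jmulDl jmulDr IH1 IH2.
  - by rewrite jmulZr !jmulZl jmulZr IH1.
move=> x y z sx sy sz; elim: sx => [g Gg||x1 x2 _ IH1 _ IH2|k x1 _ IH1].
- exact: L2.
- by rewrite !jmul0l.
- by rewrite !jmulDl IH1 IH2.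
- by rewrite !jmulZl IH1.
Qed.

Section PeirceGenerators.
Variables (p b : V) (C : set V).
Hypotheses (Hp : mul p p = p) (Hb : mul p b = b).

(* [b ^+ n] in the Peirce 1-space of [p], whose unit is [p]. *)
Definition peirce_pow n := if n is n'.+1 then jpow b n' else p.

Definition peirce_gen : set V :=
  [set g | (C g /\ mul p g = 0) \/ exists n, g = peirce_pow n].

Lemma mul_p_peirce_pow n : mul p (peirce_pow n) = peirce_pow n.
Proof.
case: n => [|n] //=; elim: n => [|n IH] /=; first exact: Hb.
exact: (peirce_mul11 Hp).
Qed.

Lemma jmul_peirce_pow i j : mul (peirce_pow i) (peirce_pow j) = peirce_pow (i + j).
Proof.
case: i => [|i]; first by rewrite mul_p_peirce_pow.
case: j => [|j]; first by rewrite jmulC mul_p_peirce_pow addn0.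
by rewrite /= jmul_pow addnS.
Qed.

Lemma peirce_gen_mul : mul_closed C -> forall g h, peirce_gen g -> peirce_gen h ->
  lspan peirce_gen (mul g h).
Proof.
move=> C_mul g h [[Cg pg]|[i ->]] [[Ch ph]|[j ->]].
- by apply: lspan_gen; left; split; [exact: C_mul | exact: (peirce_mul00 Hp)].
- by rewrite (peirce_mul01 Hp pg (mul_p_peirce_pow j)); exact: lspan0.
- by rewrite (peirce_mul10 Hp (mul_p_peirce_pow i) ph); exact: lspan0.
- by rewrite jmul_peirce_pow; apply: lspan_gen; right; exists (i + j)%N.
Qed.

Lemma peirce_gen_assoc : mul_assoc_on C -> mul_assoc_on peirce_gen.
Proof.
have p1 := mul_p_peirce_pow; have p10 := peirce_mul10 Hp; have p01 := peirce_mul01 Hp.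
move=> C_assoc x y z [[C1 Z1]|[i ->]] [[C2 Z2]|[j ->]] [[C3 Z3]|[k ->]].
- exact: C_assoc.
- by rewrite (p01 _ _ (peirce_mul00 Hp Z1 Z2) (p1 k)) (p01 _ _ Z2 (p1 k)) jmul0r.
- by rewrite (p01 _ _ Z1 (p1 j)) (p10 _ _ (p1 j) Z3) jmul0l jmul0r.
- by rewrite (p01 _ _ Z1 (p1 j)) jmul_peirce_pow (p01 _ _ Z1 (p1 _)) jmul0l.
- by rewrite (p10 _ _ (p1 i) Z2) (p10 _ _ (p1 i) (peirce_mul00 Hp Z2 Z3)) jmul0l.
- by rewrite (p10 _ _ (p1 i) Z2) (p01 _ _ Z2 (p1 k)) jmul0l jmul0r.
- by rewrite jmul_peirce_pow (p10 _ _ (p1 _) Z3) (p10 _ _ (p1 j) Z3) jmul0r.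
- by rewrite !jmul_peirce_pow addnA.
Qed.
End PeirceGenerators.

End JordanAlgebra.

(** * Closures *)

Section ClosureStability.
Variables (T U : topologicalType).

Lemma closure_sub_preimage (f : T -> U) (S : set T) (K : set U) :
  continuous f -> closed K -> S `<=` f @^-1` K -> closure S `<=` f @^-1` K.
Proof.
move=> fc Kc SK; rewrite closureE; apply: smallest_sub => //.
exact: (continuous_closedP f).1 fc _ Kc.
Qed.

Lemma closure_sub_binary (op : T -> T -> U) (S : set T) (K : set U) :
  (forall x, continuous (op x)) -> (forall y, continuous (op^~ y)) -> closed K ->
  (forall x y, S x -> S y -> K (op x y)) ->
  forall x y, closure S x -> closure S y -> K (op x y).
Proof.
move=> opx opy Kc SK.
have Sl x y : S x -> closure S y -> K (op x y).
  by move=> Sx cy; apply: (closure_sub_preimage (opx x) Kc _ cy) => z; exact: SK.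
by move=> x y cx cy; apply: (closure_sub_preimage (opy y) Kc _ cx) => z Sz; exact: Sl.
Qed.

Lemma closure_sub_ternary (h : T -> T -> T -> U) (S : set T) (K : set U) :
  (forall y z, continuous (fun x => h x y z)) ->
  (forall x z, continuous (fun y => h x y z)) ->
  (forall x y, continuous (h x y)) -> closed K ->
  (forall x y z, S x -> S y -> S z -> K (h x y z)) ->
  forall x y z, closure S x -> closure S y -> closure S z -> K (h x y z).
Proof.
move=> hx hy hz Kc SK.
have Sz z : S z -> forall x y, closure S x -> closure S y -> K (h x y z).
  move=> Szz; apply: (closure_sub_binary (op := fun x y => h x y z)
    (fun x => hy x z) (fun y => hx y z) Kc).
  by move=> x y Sx Sy; exact: SK.
by move=> x y z cx cy cz; apply: (closure_sub_preimage (hz x y) Kc _ cz) => z' Sz'; exact: Sz.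
Qed.
End ClosureStability.

Section NormedJordanAlgebra.
Variables (R : realFieldType) (A : normedModType R) (mul : A -> A -> A).
Hypotheses (HJ : jordan_product mul) (mul_norm : forall a b, `|mul a b| <= `|a| * `|b|).

Lemma continuous_additive_bounded (f : A -> A) (K : R) :
  {morph f : x y / x - y} -> (forall x, `|f x| <= K * `|x|) -> continuous f.
Proof.
move=> fB fK x; apply/cvgrPdist_lt => e e0.
have K1 : 0 < `|K| + 1 by rewrite ltr_wpDl.
near=> y.
have : `|x - y| < e / (`|K| + 1) by near: y; apply: cvgr_dist_lt; rewrite ?divr_gt0.
rewrite ltr_pdivlMr // -fB => xy.
have := fK (x - y); have := normr_ge0 (x - y); have := ler_norm K; nra.
Unshelve. all: by end_near.
Qed.

Lemma continuous_mull c : continuous (mul^~ c).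
Proof.
apply: (@continuous_additive_bounded _ `|c|) => [x y|x]; first exact: jmulBl.
by rewrite mulrC mul_norm.
Qed.

Lemma continuous_mulr c : continuous (mul c).
Proof.
apply: (@continuous_additive_bounded _ `|c|) => [x y|x]; first exact: jmulBr.
exact: mul_norm.
Qed.

Lemma closure_mul_closed S : mul_closed mul S -> mul_closed mul (closure S).
Proof.
move=> SM; apply: closure_sub_binary => //; [exact: continuous_mulr |
  exact: continuous_mull | exact: closed_closure |].
by move=> x y Sx Sy; apply/subset_closure/SM.
Qed.

Lemma closure_mul_assoc S : mul_assoc_on mul S -> mul_assoc_on mul (closure S).
Proof.
move=> SA x y z cx cy cz; apply: subr0_eq.
pose h x y z := mul (mul x y) z - mul x (mul y z).
apply: (@closure_sub_ternary _ _ h S [set 0]) => //.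
- move=> y' z' x'; apply: continuousB; last exact: continuous_mull.
  exact: continuous_comp (@continuous_mull y' x') (@continuous_mull z' _).
- move=> x' z' y'; apply: continuousB.
    exact: continuous_comp (@continuous_mulr x' y') (@continuous_mull z' _).
  exact: continuous_comp (@continuous_mull z' y') (@continuous_mulr x' _).
- move=> x' y' z'; apply: continuousB; first exact: continuous_mulr.
  exact: continuous_comp (@continuous_mulr y' z') (@continuous_mulr x' _).
- exact/accessible_closed_set1/hausdorff_accessible/norm_hausdorff.
- by move=> x' y' z' Sx Sy Sz; rewrite /h SA ?subrr.
Qed.
End NormedJordanAlgebra.

(** * JB algebras *)

Section JBAlgebra.
Variables (R : realType) (A : completeNormedModType R) (mul : A -> A -> A) (one : A).
Hypothesis HJB : is_JB_algebra mul.

Lemma JB_jordan_product : jordan_product mul.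
Proof. by case: HJB => mulDl [mulZl [mulC [_ [jordan _]]]]; split. Qed.

Lemma JB_mul_norm a b : `|mul a b| <= `|a| * `|b|.
Proof. by case: HJB => _ [_ [_ []]]. Qed.

Local Notation HJ := JB_jordan_product.

Lemma in_ASU_closure_lspan (G : set A) :
  (forall g h, G g -> G h -> lspan G (mul g h)) -> mul_assoc_on mul G ->
  closure (lspan G) one -> in_ASU mul one (closure (lspan G)).
Proof.
move=> G_mul G_assoc D1; split; first exact: closed_closure.
split=> //; split; first exact/subset_closure/lspan0.
split.
  apply: (closure_sub_binary (op := +%R)); last by move=> x y sx sy; apply/subset_closure/lspanD.
  - by move=> x y; apply: continuousD; [exact: cst_continuous | exact: cvg_id].
  - by move=> y x; apply: continuousD; [exact: cvg_id | exact: cst_continuous].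
  - exact: closed_closure.
split.
  move=> k; apply: (closure_sub_preimage (@scaler_continuous _ _ k) (@closed_closure _ _)).
  by move=> y sy; apply/subset_closure/lspanZ.
split.
  by apply: (closure_mul_closed HJ JB_mul_norm); exact: (lspan_mul_closed HJ).
by apply: (closure_mul_assoc HJ JB_mul_norm); exact: (lspan_mul_assoc HJ).
Qed.

Section Projection.
Variable p : A.
Hypothesis Hp : mul p p = p.

Lemma Uop_proj x : Uop mul p x = 2%:R *: mul p (mul p x) - mul p x.
Proof. by rewrite /Uop /sq Hp. Qed.

Lemma mul_proj_Uop x : mul p (Uop mul p x) = Uop mul p x.
Proof. by rewrite Uop_proj; exact: (peirce_mul_U HJ Hp). Qed.

Lemma Uop_peirce1 x : mul p x = x -> Uop mul p x = x.
Proof. by move=> px; rewrite Uop_proj !px; lin_module R. Qed.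

Lemma Uop_ASU C c : in_ASU mul one C -> C p -> C c -> Uop mul p c = mul p c.
Proof.
move=> [_ [_ [_ [_ [_ [_ C_assoc]]]]]] Cp Cc.
by rewrite Uop_proj -C_assoc // Hp; lin_module R.
Qed.

Lemma maximal_ASU_peirce1_sub C b : maximal_ASU mul one C -> C p ->
  (forall c, C c -> exists k : R, mul p c = k *: p) -> mul p b = b -> C b.
Proof.
move=> [C_ASU C_max] Cp pC pb.
have [_ [C1 [_ [C_add [C_scale [C_mul C_assoc]]]]]] := C_ASU.
pose D := closure (lspan (peirce_gen mul p b C)).
have CD : C `<=` D.
  move=> c Cc; have [k pc] := pC c Cc.
  apply: subset_closure; rewrite -(subrK (mul p c) c); apply: lspanD.
    apply: lspan_gen; left; split.
      by apply: C_add => //; rewrite -scaleN1r; apply: C_scale; exact: C_mul.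
    by rewrite (jmulBr HJ) -C_assoc // Hp subrr.
  by rewrite pc; apply: lspanZ; apply: lspan_gen; right; exists 0%N.
have D_ASU : in_ASU mul one D.
  apply: in_ASU_closure_lspan; last exact: CD.
    exact: (peirce_gen_mul HJ Hp pb C_mul).
  exact: (peirce_gen_assoc HJ Hp pb C_assoc).
rewrite -(C_max D D_ASU CD); apply/subset_closure/lspan_gen; right; by exists 1%N.
Qed.
End Projection.

Lemma Uop0 x : Uop mul 0 x = 0.
Proof. by rewrite /Uop /sq !(jmul0l HJ) ?(jmul0r HJ) scaler0 subr0. Qed.

Lemma dim1_Uop_neq0 S p : dim1 (Uop mul p @` S) -> p != 0.
Proof.
by move=> [v [[x _ <-] + _]]; apply: contraNneq => ->; rewrite Uop0.
Qed.

Lemma dim1_span (S : set A) v w : dim1 S -> S v -> v != 0 -> S w ->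
  exists k : R, w = k *: v.
Proof.
move=> [u [_ _ Su]] /Su [k0 ->] v0 /Su [k ->].
have k0_neq0 : k0 != 0 by apply: contraNneq v0 => ->; rewrite scale0r.
by exists (k / k0); rewrite scalerA divfK.
Qed.

Section MaximalASU.
Variables (C : set A) (p : A).
Hypotheses (Cp : C p) (Hp : mul p p = p).

Let Up_p : (Uop mul p @` C) p.
Proof. by exists p => //; exact: Uop_peirce1. Qed.

Lemma dim1_Uop_extend : maximal_ASU mul one C ->
  dim1 (Uop mul p @` C) -> dim1 (Uop mul p @` setT).
Proof.
move=> C_max dimC.
have p0 := dim1_Uop_neq0 dimC.
have span_p := dim1_span dimC Up_p p0.
exists p; split=> //; first by exists p => //; exact: Uop_peirce1.
move=> _ [a _ <-]; have pU := mul_proj_Uop Hp a.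
have CU : C (Uop mul p a).
  apply: (maximal_ASU_peirce1_sub Hp C_max Cp) pU => c Cc.
  by apply: span_p; exists c => //; exact: (Uop_ASU Hp C_max.1).
by apply: span_p; exists (Uop mul p a) => //; exact: Uop_peirce1.
Qed.

Lemma dim1_Uop_restrict : dim1 (Uop mul p @` setT) -> dim1 (Uop mul p @` C).
Proof.
move=> dimA; have p0 := dim1_Uop_neq0 dimA.
exists p; split=> // _ [c _ <-]; apply: (dim1_span dimA) _ p0 _; last by exists c.
by exists p => //; exact: Uop_peirce1.
Qed.
End MaximalASU.
End JBAlgebra.

Local Close Scope ring_scope.

Theorem lemma2p4 (R : realType) (A : completeNormedModType R)
    (mul : A -> A -> A) (one : A) (C : set A) (p : A) :
  is_JBW_algebra mul one ->
  maximal_ASU mul one C ->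
  C p -> mul p p = p ->
  (dim1 (Uop mul p @` C) <-> dim1 (Uop mul p @` setT)).
Proof.
move=> [HJB _ _] C_max Cp Hp; split.
  exact: (dim1_Uop_extend HJB Cp Hp C_max).
exact: (dim1_Uop_restrict HJB Cp Hp).
Qed.
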